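(* For positive integers $n$, \[ A'(n,4,4) = \begin{cases} 1,&\text{if } n\leq 3, \\ 2,&\text{if } n\in\{4,5\}, \\ 4,&\text{if } n=6, \\ 8,&\text{if } n=7, \\ 19,&\text{if } n=9. \end{cases} \]
   Context: $A'(n,4,4)$ denotes the maximum size of a nonempty set $S\subseteq \mathbb{F}_2^n$ such that every element of $S$ has Hamming weight at most $4$ and any two distinct elements of $S$ are at Hamming distance at least $4$. *)

From mathcomp Require Import all_boot.
Set Implicit Arguments. Unset Strict Implicit. Unset Printing Implicit Defensive.

Definition vec (n : nat) := {ffun 'I_n -> bool}.

Definition hweight n (x : vec n) : nat := #|[set i | x i]|.

Definition hdist n (x y : vec n) : nat := #|[set i | x i != y i]|.

Definition cw_code n d w (S : {set vec n}) : bool :=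
  [&& S != set0,
      [forall x in S, hweight x <= w] &
      [forall x in S, forall y in S, (x != y) ==> (d <= hdist x y)]].

Definition Aprime n d w : nat := \max_(S : {set vec n} | cw_code d w S) #|S|.

From mathcomp Require Import all_boot zify.
Set Implicit Arguments. Unset Strict Implicit. Unset Printing Implicit Defensive.

(* For n <= 7 the upper bounds follow from
   the Plotkin bound: in the sum of the distances over all ordered pairs of the
   m codewords each coordinate contributes at most m^2 / 2, so
   2 d (m - 1) <= n m.

   For n = 9 the weight restriction is needed.  Every codeword of weight w in
   {2, 3, 4} spreads 12 units evenly over the w (w - 1) ordered pairs of points
   of its support.  Two codewords through the same two points both have weight
   4 and meet only there, so a pair of points receives 6 or 2 from a single
   codeword of weight 2 or 3, or 1 from each of a family of weight-4 codewords
   whose remaining points form disjoint pairs among the other 7 points, i.e.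
   at most 3.  Weight-2 codewords are disjoint, and a pair joining two of them
   receives at most 2; hence the 72 ordered pairs receive at most 222 in total,
   so at most 18 codewords have weight >= 2, and at most one has weight <= 1. *)

Lemma card_setE (T : finType) (P : pred T) : #|[set x | P x]| = \sum_x P x.
Proof. by rewrite -sum1_card big_mkcond; apply: eq_bigr => x _; rewrite inE; case: (P x). Qed.

Lemma card_sepE (T : finType) (A : {set T}) (P : pred T) :
  #|[set x in A | P x]| = \sum_(x in A) P x.
Proof. by rewrite card_setE [RHS]big_mkcond; apply: eq_bigr => x _; case: (x \in A). Qed.

Lemma card_subsetE (T : finType) (A B : {set T}) :
  B \subset A -> #|B| = \sum_(x in A) (x \in B).
Proof.
move=> sBA; rewrite -card_sepE; apply: eq_card => x.
by rewrite inE andb_idl //; apply: (subsetP sBA).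
Qed.

Lemma pairwise_sym_in (T : eqType) (r : rel T) (s : seq T) : symmetric r ->
  pairwise r s -> {in s &, forall x y, x != y -> r x y}.
Proof.
move=> rC; elim: s => [|a s IH] //= /andP [/allP ra /IH {}IH] x y.
rewrite !inE => /predU1P [-> | xs] /predU1P [-> | ys]; rewrite ?eqxx // => xy.
- exact: ra.
- by rewrite rC; apply: ra.
- exact: IH.
Qed.

Lemma sum_ord_count n (P : pred nat) : \sum_(i < n) P i = count P (iota 0 n).
Proof.
rewrite -(big_mkord xpredT (fun i => nat_of_bool (P i))) /index_iota subn0.
by rewrite -sum1_count [RHS]big_mkcond; apply: eq_bigr => i _; case: (P i).
Qed.

Section Vectors.
Variable n : nat.
Implicit Types x y : vec n.

Definition supp x : {set 'I_n} := [set i | x i].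

Lemma sub_supp x (T : {set 'I_n}) : {in T, forall i, x i} -> T \subset supp x.
Proof. by move=> h; apply/subsetP => i /h; rewrite inE. Qed.

Lemma hdistE x y : hdist x y = \sum_i (x i != y i).
Proof. exact: card_setE. Qed.

Lemma hdistxx x : hdist x x = 0.
Proof. by rewrite hdistE big1 // => i _; rewrite eqxx. Qed.

Lemma hdistC x y : hdist x y = hdist y x.
Proof. by rewrite !hdistE; apply: eq_bigr => i _; rewrite eq_sym. Qed.

Lemma hdist_le_len x y : hdist x y <= n.
Proof. by rewrite /hdist (leq_trans (max_card _)) ?card_ord. Qed.

Lemma hdist_add_common x y :
  hdist x y + 2 * #|supp x :&: supp y| = hweight x + hweight y.
Proof.
rewrite /hdist; have -> : [set i | x i != y i] = (supp x :|: supp y) :\: (supp x :&: supp y).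
  by apply/setP => i; rewrite !inE; case: (x i); case: (y i).
have sIU : supp x :&: supp y \subset supp x :|: supp y.
  exact: subset_trans (subsetIl _ _) (subsetUl _ _).
rewrite cardsDS // mul2n -addnn addnA subnK ?subset_leq_card //.
exact: cardsUI.
Qed.

Lemma hdist_le_hweight x y : hdist x y <= hweight x + hweight y.
Proof. by rewrite -hdist_add_common leq_addr. Qed.

Lemma pair_weight_ge2 x i p : i != p -> x i -> x p -> 2 <= hweight x.
Proof.
move=> ip xi xp; have := cards2 i p; rewrite ip => <-.
by rewrite subset_leq_card //; apply: sub_supp => k; rewrite !inE => /orP [] /eqP ->.
Qed.

Lemma sum_ordered_pairs x :
  \sum_i \sum_(p | p != i) (x i && x p) + hweight x = hweight x * hweight x.
Proof.
rewrite /hweight card_setE big_distrl -big_split /=; apply: eq_bigr => i _.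
rewrite [in RHS](bigD1 i) //= mulnDr big_distrr /= addnC.
congr (_ + _); first by case: (x i).
by apply: eq_bigr => p _; rewrite mulnb.
Qed.

Lemma sum_coord_disagree (S : {set vec n}) i :
  2 * (\sum_(x in S) \sum_(y in S) (x i != y i)) <= #|S| * #|S|.
Proof.
pose a := \sum_(x in S) x i; pose b := \sum_(x in S) ~~ x i.
have ab : a + b = #|S|.
  by rewrite -big_split -sum1_card; apply: eq_bigr => x _; case: (x i).
have neqE (u v : bool) : (u != v : nat) = u * ~~ v + ~~ u * v by case: u; case: v.
have -> : \sum_(x in S) \sum_(y in S) (x i != y i) = a * b + b * a.
  rewrite big_distrl big_distrl -big_split; apply: eq_bigr => x _ /=.
  by rewrite big_distrr big_distrr -big_split; apply: eq_bigr => y _; apply: neqE.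
by rewrite -ab [b * a]mulnC addnn -mul2n mulnA mulnn nat_AGM2.
Qed.

Lemma plotkin_bound d (S : {set vec n}) :
  {in S &, forall x y, x != y -> d <= hdist x y} ->
  2 * d * (#|S| - 1) <= n * #|S|.
Proof.
move=> hd; pose D := \sum_(x in S) \sum_(y in S) hdist x y.
have lowD : #|S| * (d * (#|S| - 1)) <= D.
  rewrite -sum_nat_const; apply: leq_sum => x xS.
  rewrite (big_setD1 x xS) /= hdistxx add0n (cardsD1 x S) xS add1n subn1 /= mulnC.
  rewrite -sum_nat_const; apply: leq_sum => y; rewrite !inE => /andP [yx yS].
  by rewrite hd // eq_sym.
have upD : 2 * D <= n * (#|S| * #|S|).
  have -> : D = \sum_i \sum_(x in S) \sum_(y in S) (x i != y i).
    rewrite /D; under eq_bigr do under eq_bigr do rewrite hdistE.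
    under eq_bigr do rewrite exchange_big.
    by rewrite exchange_big.
  rewrite big_distrr /=; apply: (@leq_trans (\sum_(i < n) #|S| * #|S|)).
    by apply: leq_sum => i _; apply: sum_coord_disagree.
  by rewrite sum_nat_const card_ord.
nia.
Qed.

End Vectors.

Section WeightFourCodes.
Variables (n : nat) (S : {set vec n}).
Hypothesis weightS : {in S, forall x, hweight x <= 4}.
Hypothesis distS : {in S &, forall x y, x != y -> 4 <= hdist x y}.

Lemma code_overlap x y (T : {set 'I_n}) : x \in S -> y \in S -> x != y ->
  {in T, forall i, x i && y i} -> 4 + 2 * #|T| <= hweight x + hweight y.
Proof.
move=> xS yS xy xyT; rewrite -hdist_add_common leq_add ?distS // leq_mul2l.
by rewrite subset_leq_card // subsetI !sub_supp // => i /xyT /andP [].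
Qed.

Lemma pair_overlap_weight4 x y i p : x \in S -> y \in S -> x != y -> i != p ->
  x i -> x p -> y i -> y p -> hweight x = 4.
Proof.
move=> xS yS xy ip xi xp yi yp.
have xyT : {in [set i; p], forall k, x k && y k}.
  by move=> k; rewrite !inE => /orP [] /eqP ->; apply/andP.
have := code_overlap xS yS xy xyT; rewrite cards2 ip.
have := weightS xS; have := weightS yS; lia.
Qed.

Lemma triple_overlap_eq x y i p q : x \in S -> y \in S -> i != p -> i != q -> p != q ->
  x i -> x p -> x q -> y i -> y p -> y q -> x = y.
Proof.
move=> xS yS ip iq pq xi xp xq yi yp yq; apply/eqP; apply: contraT => xy.
have xyT : {in i |: [set p; q], forall k, x k && y k}.
  by move=> k; rewrite !inE => /orP [ | /orP [] ] /eqP ->; apply/andP.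
have := code_overlap xS yS xy xyT; rewrite cardsU1 cards2 !inE (negbTE ip) (negbTE iq) pq.
have := weightS xS; have := weightS yS => /=; lia.
Qed.

Lemma weight2_overlap_eq x y i : x \in S -> y \in S -> hweight x = 2 -> hweight y = 2 ->
  x i -> y i -> x = y.
Proof.
move=> xS yS wx wy xi yi; apply/eqP; apply: contraT => xy.
have xyT : {in [set i], forall k, x k && y k} by move=> k; rewrite inE => /eqP ->; apply/andP.
by have := code_overlap xS yS xy xyT; rewrite cards1 wx wy.
Qed.

Lemma weight2_disjoint u v : u \in S -> v \in S -> hweight u = 2 -> hweight v = 2 ->
  u != v -> #|supp u :|: supp v| = 4.
Proof.
move=> uS vS u2 v2 uv.
have uvT : {in supp u :&: supp v, forall k, u k && v k} by move=> k; rewrite !inE.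
have := code_overlap uS vS uv uvT; rewrite cardsU -![#|supp _|]/(hweight _) u2 v2.
lia.
Qed.

Lemma weight2_avoid u y i q : u \in S -> y \in S -> hweight u = 2 -> hweight y = 4 ->
  u i -> y i -> u q -> y q -> q = i.
Proof.
move=> uS yS u2 y4 ui yi uq yq; apply/eqP; apply: contraT; rewrite eq_sym => iq.
have uy : u != y by apply: contra_eqN u2 => /eqP ->; rewrite y4.
by rewrite (pair_overlap_weight4 uS yS uy iq ui uq yi yq) in u2.
Qed.

Lemma light_words_card : #|[set x in S | hweight x <= 1]| <= 1.
Proof.
apply/card_le1_eqP => x y; rewrite !inE => /andP [xS wx] /andP [yS wy].
apply/eqP; apply: contraT => /(distS yS xS).
have := hdist_le_hweight y x; lia.
Qed.

(* [share w * (w * (w - 1)) = 12] for [2 <= w <= 4]. *)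
Definition share w := match w with 2 => 6 | 3 => 2 | 4 => 1 | _ => 0 end.

Definition load i p := \sum_(x in S | x i && x p) share (hweight x).

Definition mate i p := [exists x in S, [&& hweight x == 2, x i & x p]].
Definition mated i := [exists x in S, (hweight x == 2) && x i].
Definition cross i p := [&& mated i, mated p & ~~ mate i p].

Lemma sum_load :
  \sum_i \sum_(p | p != i) load i p = 12 * #|[set x in S | 1 < hweight x]|.
Proof.
have loadE i p : load i p = \sum_(x in S) (x i && x p) * share (hweight x).
  by rewrite /load big_mkcondr; apply: eq_bigr => x _; case: (_ && _); rewrite ?mul1n.
under eq_bigr do under eq_bigr do rewrite loadE.
under eq_bigr do rewrite exchange_big.
rewrite exchange_big card_setE big_distrr big_mkcond /=.
apply: eq_bigr => x _; case: (boolP (x \in S)) => //= xS.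
set s := share _; set t := \sum_i _.
have -> : t = (\sum_i \sum_(p | p != i) (x i && x p)) * s.
  by rewrite big_distrl; apply: eq_bigr => i _; rewrite big_distrl.
rewrite {}/t {}/s.
have := sum_ordered_pairs x; have := weightS xS.
by case: (hweight x) => [|[|[|[|[|w]]]]] //=; lia.
Qed.

Lemma packing_bound i p (A : {set 'I_n}) : i != p ->
  (forall x, x \in S -> x i -> x p -> hweight x = 4 /\ supp x :\: [set i; p] \subset A) ->
  2 * #|[set x in S | x i && x p]| <= #|A|.
Proof.
move=> ip hF; set F := [set x in S | x i && x p].
have FP x : x \in F -> [/\ x \in S, x i, x p & hweight x = 4].
  by rewrite inE => /andP [xS /andP [xi xp]]; have [w4 _] := hF x xS xi xp.
have cardR x : x \in F -> #|supp x :\: [set i; p]| = 2.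
  case/FP => _ xi xp w4; rewrite cardsDS ?cards2 ?ip -?[#|supp x|]/(hweight x) ?w4 //.
  by apply: sub_supp => k; rewrite !inE => /orP [] /eqP ->.
have disj q : \sum_(x in F) (q \in supp x :\: [set i; p]) <= 1.
  rewrite -card_sepE; apply/card_le1_eqP => x y; rewrite !inE.
  move=> /and3P [/and3P [xS xi xp] qip xq] /and3P [/and3P [yS yi yp] _ yq].
  move: qip; rewrite negb_or => /andP [qi qp].
  by apply: (triple_overlap_eq (q := q) yS xS ip); rewrite 1?eq_sym.
have -> : 2 * #|F| = \sum_(x in F) #|supp x :\: [set i; p]|.
  by rewrite mulnC -sum_nat_const; apply: eq_bigr => x /cardR.
under eq_bigr => x /FP [xS xi xp _] do rewrite (card_subsetE (proj2 (hF x xS xi xp))).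
rewrite exchange_big -sum1_card; apply: leq_sum => q _; exact: disj.
Qed.

Lemma light_pair_load x i p : i != p -> x \in S -> x i -> x p -> hweight x <= 3 ->
  load i p = share (hweight x).
Proof.
move=> ip xS xi xp wx; rewrite /load (big_pred1 x) // => y.
apply/andP/eqP => [[yS /andP [yi yp]] | ->]; last by rewrite xS xi xp.
apply/eqP; apply: contraT => yx.
have := pair_overlap_weight4 xS yS _ ip xi xp yi yp.
by rewrite eq_sym yx => /(_ isT) w4; rewrite w4 in wx.
Qed.

Lemma heavy_pair_load i p : (forall x, x \in S -> x i -> x p -> hweight x = 4) ->
  load i p = #|[set x in S | x i && x p]|.
Proof.
move=> w4; rewrite card_sepE /load big_mkcondr; apply: eq_bigr => x xS.
by case: (boolP (x i && x p)) => // /andP [xi xp]; rewrite w4.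
Qed.

Lemma load_cross_le i p : i != p ->
  load i p + cross i p <= maxn 3 ((n - 2) %/ 2) + 3 * mate i p.
Proof.
move=> ip; have K3 : 3 <= maxn 3 ((n - 2) %/ 2) := leq_maxl _ _.
case: (boolP [exists x in S, [&& x i, x p & hweight x <= 3]]).
  case/exists_inP => x xS /and3P [xi xp wx]; rewrite (light_pair_load ip xS xi xp wx).
  have wx2 := pair_weight_ge2 ip xi xp.
  have [w2 | w3] : hweight x = 2 \/ hweight x = 3 by lia.
    have m : mate i p by apply/exists_inP; exists x; rewrite // w2 xi xp.
    by rewrite /cross m andbF w2 /=; lia.
  by rewrite w3 /=; have := leq_b1 (cross i p); lia.
move/exists_inP => light.
have w4 x : x \in S -> x i -> x p -> hweight x = 4.
  move=> xS xi xp; have := weightS xS.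
  have : ~~ (hweight x <= 3) by apply/negP => wx; apply: light; exists x; rewrite ?xi ?xp.
  lia.
have nomate : mate i p = false.
  by apply/exists_inP => -[x xS /and3P [/eqP w2 xi xp]]; rewrite (w4 x xS xi xp) in w2.
rewrite (heavy_pair_load w4) nomate muln0 addn0.
case cr: (cross i p); last first.
  have sub x : x \in S -> x i -> x p ->
      hweight x = 4 /\ supp x :\: [set i; p] \subset ~: [set i; p].
    by move=> xS xi xp; split; [exact: w4 | rewrite setDE subsetIr].
  have := packing_bound ip sub; rewrite [#|~: _|]cardsCs setCK card_ord cards2 ip /=.
  lia.
move: cr; rewrite /cross nomate andbT.
case/andP => /exists_inP [u uS /andP [/eqP u2 ui]] /exists_inP [v vS /andP [/eqP v2 vp]].
have uv : u != v.
  by apply: contraFneq nomate => euv; apply/exists_inP; exists u; rewrite // u2 ui euv vp.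
have sub y : y \in S -> y i -> y p ->
    hweight y = 4 /\ supp y :\: [set i; p] \subset ~: (supp u :|: supp v).
  move=> yS yi yp; have y4 := w4 y yS yi yp; split => //.
  apply/subsetP => q; rewrite !inE !negb_or => /andP [/andP [qi qp] yq].
  apply/andP; split; apply/negP => xq.
  - by rewrite (weight2_avoid uS yS u2 y4 ui yi xq yq) eqxx in qi.
  - by rewrite (weight2_avoid vS yS v2 y4 vp yp xq yq) eqxx in qp.
have := packing_bound ip sub.
rewrite [#|~: _|]cardsCs setCK card_ord (weight2_disjoint uS vS u2 v2 uv) /=.
lia.
Qed.

Lemma sum_mate_le i : \sum_(p | p != i) mate i p <= mated i.
Proof.
case: (boolP (mated i)) => [/exists_inP [u uS /andP [/eqP u2 ui]] | nm]; last first.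
  rewrite big1 // => p _; apply/eqP; rewrite eqb0; apply: contra nm.
  by case/exists_inP => w wS /and3P [w2 wi _]; apply/exists_inP; exists w; rewrite // w2 wi.
apply: (@leq_trans (\sum_(p | p != i) u p)).
  apply: leq_sum => p _; case: (boolP (mate i p)) => // /exists_inP [w wS /and3P [/eqP w2 wi wp]].
  by rewrite (weight2_overlap_eq uS wS u2 w2 ui wi) wp.
have : hweight u = u i + \sum_(p | p != i) u p by rewrite /hweight card_setE (bigD1 i).
by rewrite u2 ui add1n => -[<-].
Qed.

Lemma sum_cross_ge i :
  mated i * (#|[set j | mated j]| - 2) <= \sum_(p | p != i) cross i p.
Proof.
case: (boolP (mated i)) => [mi | _]; last by rewrite mul0n.
case/exists_inP: (mi) => u uS /andP [/eqP u2 ui]; rewrite mul1n.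
have -> : \sum_(p | p != i) cross i p = #|[set p | (p != i) && cross i p]|.
  by rewrite card_setE big_mkcond; apply: eq_bigr => p _; case: (p != i).
apply: (@leq_trans #|[set j | mated j] :\: supp u|).
  rewrite cardsD leq_sub2l //; apply: leq_trans (subset_leq_card (subsetIr _ _)) _.
  by rewrite -[#|supp u|]/(hweight u) u2.
apply: subset_leq_card; apply/subsetP => j; rewrite !inE => /andP [uj mj].
apply/andP; split; first by apply: contraNneq uj => ->.
rewrite /cross mi mj /=; apply: contra uj => /exists_inP [w wS /and3P [/eqP w2 wi wj]].
by rewrite (weight2_overlap_eq uS wS u2 w2 ui wi).
Qed.

Lemma heavy_words_card (M := #|[set j | mated j]|) (K := maxn 3 ((n - 2) %/ 2)) :
  12 * #|[set x in S | 1 < hweight x]| + M * (M - 2) <= n * (n - 1) * K + 3 * M.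
Proof.
have sumM : \sum_i mated i = M by rewrite /M card_setE.
rewrite -sum_load.
apply: (@leq_trans (\sum_i \sum_(p | p != i) (load i p + cross i p))).
  have -> : \sum_i \sum_(p | p != i) (load i p + cross i p) =
      \sum_i \sum_(p | p != i) load i p + \sum_i \sum_(p | p != i) cross i p.
    by rewrite -big_split; apply: eq_bigr => i _; rewrite big_split.
  rewrite leq_add2l -[M in M * _]sumM big_distrl /=; apply: leq_sum => i _; exact: sum_cross_ge.
apply: (@leq_trans (\sum_i \sum_(p | p != i) (K + 3 * mate i p))).
  by apply: leq_sum => i _; apply: leq_sum => p pi; apply: load_cross_le; rewrite eq_sym.
apply: (@leq_trans (\sum_i ((n - 1) * K + 3 * mated i))).
  apply: leq_sum => i _; rewrite big_split /= -big_distrr /= leq_add ?leq_mul2l ?sum_mate_le //.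
  by rewrite big_const iter_addn_0 cardC1 card_ord subn1 mulnC.
by rewrite big_split /= -!big_distrr /= sumM sum_nat_const card_ord mulnCA mulnA.
Qed.

Lemma card_light_heavy :
  #|[set x in S | hweight x <= 1]| + #|[set x in S | 1 < hweight x]| = #|S|.
Proof.
rewrite !card_sepE -big_split -sum1_card.
by apply: eq_bigr => x _; rewrite ltnNge; case: (_ <= 1).
Qed.

End WeightFourCodes.

Lemma code9_card_le (S : {set vec 9}) :
  {in S, forall x, hweight x <= 4} -> {in S &, forall x y, x != y -> 4 <= hdist x y} ->
  #|S| <= 19.
Proof.
move=> wS dS; have := heavy_words_card wS dS; have := light_words_card dS.
have := card_light_heavy S; nia.
Qed.

Lemma cw_codeP n d w (S : {set vec n}) :
  reflect [/\ S != set0, {in S, forall x, hweight x <= w}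
            & {in S &, forall x y, x != y -> d <= hdist x y}]
          (cw_code d w S).
Proof.
apply: (iffP and3P) => [[S0 /forall_inP hw /forall_inP hd] | [S0 hw hd]].
  by split=> // x y xS yS; apply/implyP/(forall_inP (hd x xS)).
split=> //; first by apply/forall_inP.
by apply/forall_inP => x xS; apply/forall_inP => y yS; apply/implyP/hd.
Qed.

Lemma Aprime_le n d w B :
  (forall S : {set vec n}, cw_code d w S -> #|S| <= B) -> Aprime n d w <= B.
Proof. by move=> hB; apply/bigmax_leqP. Qed.

Lemma Aprime_ge n d w (S : {set vec n}) : cw_code d w S -> #|S| <= Aprime n d w.
Proof. exact: leq_bigmax_cond. Qed.

Lemma Aprime_short n d w : n < d -> Aprime n d w = 1.
Proof.
move=> nd; apply/eqP; rewrite eqn_leq; apply/andP; split.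
  apply: Aprime_le => S /cw_codeP [_ _ hd]; apply/card_le1_eqP => x y xS yS.
  apply/eqP; apply: contraT => /(hd y x yS xS); have := hdist_le_len y x; lia.
pose zero : vec n := [ffun => false].
apply: leq_trans (Aprime_ge (S := [set zero]) _); rewrite ?cards1 //.
apply/cw_codeP; split; first by apply/set0Pn; exists zero; rewrite set11.
  by move=> x; rewrite inE => /eqP ->; rewrite /hweight card_setE big1 // => i _; rewrite ffunE.
by move=> x y; rewrite !inE => /eqP -> /eqP ->; rewrite eqxx.
Qed.

Definition indicator n (s : seq nat) : vec n := [ffun i => val i \in s].

Lemma hweight_indicator n s : hweight (indicator n s) = count (mem s) (iota 0 n).
Proof. by rewrite /hweight card_setE -sum_ord_count; apply: eq_bigr => i _; rewrite ffunE. Qed.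

Lemma hdist_indicator n s t :
  hdist (indicator n s) (indicator n t) = count (fun i => (i \in s) != (i \in t)) (iota 0 n).
Proof. by rewrite hdistE -sum_ord_count; apply: eq_bigr => i _; rewrite !ffunE. Qed.

(* A code listed by the supports of its codewords; unlike [cw_code], this is
   decided by evaluation. *)
Definition support_code n d w (L : seq (seq nat)) : bool :=
  [&& L != [::], all (fun s => count (mem s) (iota 0 n) <= w) L
    & pairwise (fun s t => d <= count (fun i => (i \in s) != (i \in t)) (iota 0 n)) L].

Lemma Aprime_ge_support_code n d w L : 0 < d -> support_code n d w L ->
  size L <= Aprime n d w.
Proof.
move=> d0 /and3P [L0 wL dL]; set C := map (indicator n) L.
have dC : pairwise (fun x y => d <= hdist x y) C.
  by rewrite pairwise_map; apply: sub_pairwise dL => s t; rewrite /= hdist_indicator.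
have uC : uniq C by apply: pairwise_uniq dC => x; rewrite hdistxx leqNgt d0.
rewrite -(size_map (indicator n)) -(card_uniqP uC) -cardsE; apply: Aprime_ge.
apply/cw_codeP; split.
- have [s sL] : exists s, s \in L by case: (L) L0 => [|s L'] // _; exists s; rewrite mem_head.
  by apply/set0Pn; exists (indicator n s); rewrite inE map_f.
- move=> _ /[!inE] /mapP [s sL ->]; rewrite hweight_indicator; exact: (allP wL).
- have dsym : symmetric (fun x y : vec n => d <= hdist x y) by move=> u v; rewrite hdistC.
  move=> x y; rewrite !inE; exact: (pairwise_sym_in dsym dC).
Qed.

Definition code6 : seq (seq nat) :=
  [:: [::]; [:: 0; 1; 2; 3]; [:: 0; 1; 4; 5]; [:: 2; 3; 4; 5]].

(* The zero word and the complements of the lines of the Fano plane. *)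
Definition code7 : seq (seq nat) :=
  [:: [::]; [:: 0; 1; 2; 3]; [:: 0; 1; 4; 5]; [:: 0; 2; 4; 6]; [:: 0; 3; 5; 6];
      [:: 1; 2; 5; 6]; [:: 1; 3; 4; 6]; [:: 2; 3; 4; 5]].

Definition code9 : seq (seq nat) :=
  [:: [::]; [:: 0; 1; 2; 3]; [:: 0; 1; 4; 5]; [:: 0; 1; 6; 7]; [:: 0; 2; 4; 6];
      [:: 0; 2; 5; 8]; [:: 0; 3; 5; 7]; [:: 0; 3; 6; 8]; [:: 0; 4; 7; 8];
      [:: 1; 2; 4; 7]; [:: 1; 2; 6; 8]; [:: 1; 3; 4; 8]; [:: 1; 3; 5; 6];
      [:: 1; 5; 7; 8]; [:: 2; 3; 4; 5]; [:: 2; 3; 7; 8]; [:: 2; 5; 6; 7];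
      [:: 3; 4; 6; 7]; [:: 4; 5; 6; 8]].

Lemma Aprime_eq_plotkin n d w L : 0 < d ->
  (forall m, 2 * d * (m - 1) <= n * m -> m <= size L) -> support_code n d w L ->
  Aprime n d w = size L.
Proof.
move=> d0 ub hL; apply/eqP; rewrite eqn_leq Aprime_ge_support_code // andbT.
by apply: Aprime_le => S /cw_codeP [_ _ /plotkin_bound]; apply: ub.
Qed.

Theorem proposition8 (n : nat) (hn : 0 < n) :
  [/\ (n <= 3 -> Aprime n 4 4 = 1),
      (n = 4 \/ n = 5 -> Aprime n 4 4 = 2),
      (n = 6 -> Aprime n 4 4 = 4),
      (n = 7 -> Aprime n 4 4 = 8) &
      (n = 9 -> Aprime n 4 4 = 19)].
Proof.
split=> [n3 | n45 | -> | -> | ->].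
- exact: Aprime_short.
- by case: n45 => ->; apply: (Aprime_eq_plotkin (L := take 2 code6)) => // m /=; lia.
- by apply: (Aprime_eq_plotkin (L := code6)) => // m /=; lia.
- by apply: (Aprime_eq_plotkin (L := code7)) => // m /=; lia.
- apply/eqP; rewrite eqn_leq (Aprime_ge_support_code (L := code9)) ?andbT //.
  by apply: Aprime_le => S /cw_codeP [_ wS dS]; apply: code9_card_le.
Qed.
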